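(* Let $A,B \in M_n(\mathbb{R}_+)$ be simultaneously triangularizable. Then the family $\{A, B, [A,B]_\oplus\}$ is also simultaneously triangularizable, where $[A,B]_\oplus = AB \oplus BA$.
   Context: Max algebra: $\mathbb{R}_+$ the nonnegative reals with $a\oplus b=\max\{a,b\}$ and ordinary multiplication; for $A,B\in M_n(\mathbb{R}_+)$, $(AB)_{ij}=\max_k a_{ik}b_{kj}$ and $(A\oplus B)_{ij}=\max\{a_{ij},b_{ij}\}$. $GL_n(\mathbb{R}_+)$ is the set of matrices invertible under this product (the generalized permutation matrices). A family of matrices is simultaneously triangularizable if there is one $P\in GL_n(\mathbb{R}_+)$ such that $P^{-1}XP$ is upper triangular for every member $X$ of the family. $[A,B]_\oplus=AB\oplus BA$ is the max commutator. *)

From mathcomp Require Import all_boot all_order all_algebra.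
From mathcomp Require Import reals.
Set Implicit Arguments. Unset Strict Implicit. Unset Printing Implicit Defensive.
Import Order.TTheory GRing.Theory Num.Theory.
Local Open Scope ring_scope.

Definition nonneg_mx (R : realType) (n : nat) (A : 'M[R]_n) : Prop :=
  forall i j, 0 <= A i j.

(* Max-algebra product: (A (x) B)_ij = max_k a_ik b_kj  (0 is the neutral
   element of max on R_+). *)
Definition maxmul (R : realType) (n : nat) (A B : 'M[R]_n) : 'M[R]_n :=
  \matrix_(i, j) \big[Num.max/0]_(k < n) (A i k * B k j).

Definition maxadd (R : realType) (n : nat) (A B : 'M[R]_n) : 'M[R]_n :=
  \matrix_(i, j) Num.max (A i j) (B i j).

Definition maxid (R : realType) (n : nat) : 'M[R]_n :=
  \matrix_(i, j) (if i == j then 1 else 0).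

Definition max_invertible (R : realType) (n : nat) (P : 'M[R]_n) : Prop :=
  nonneg_mx P /\
  exists Q : 'M[R]_n, nonneg_mx Q /\ maxmul P Q = maxid R n /\ maxmul Q P = maxid R n.

Definition upper_tri (R : realType) (n : nat) (A : 'M[R]_n) : Prop :=
  forall i j : 'I_n, (j < i)%N -> A i j = 0.

Definition simul_triang (R : realType) (n : nat) (F : 'M[R]_n -> Prop) : Prop :=
  exists P Q : 'M[R]_n,
    nonneg_mx P /\ nonneg_mx Q /\
    maxmul P Q = maxid R n /\ maxmul Q P = maxid R n /\
    forall X, F X -> upper_tri (maxmul (maxmul Q X) P).

Definition maxcomm (R : realType) (n : nat) (A B : 'M[R]_n) : 'M[R]_n :=
  maxadd (maxmul A B) (maxmul B A).

(* Conjugation X |-> Q (x) X (x) P by a max-invertible P with P (x) Q = I is a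
   homomorphism for (x) and (+) on nonnegative matrices, because over R_+ the
   max product is associative, has I as unit and distributes over (+).
   Upper triangular matrices are closed under (x) and (+), so conjugating the
   commutator gives the commutator of the upper triangular conjugates of A
   and B, which is again upper triangular. *)
From mathcomp Require Import all_boot all_order all_algebra.
From mathcomp Require Import reals.
Set Implicit Arguments. Unset Strict Implicit. Unset Printing Implicit Defensive.
Import Order.TTheory GRing.Theory Num.Theory.
Local Open Scope ring_scope.

Section BigmaxNonneg.
Variables (R : realDomainType) (I : Type) (r : seq I) (P : pred I).

Lemma mulr_bigmaxr (c : R) (F : I -> R) : 0 <= c ->
  c * \big[Num.max/0]_(i <- r | P i) F i = \big[Num.max/0]_(i <- r | P i) (c * F i).
Proof. by move=> c0; apply: big_endo => [x y|]; rewrite ?maxr_pMr ?mulr0. Qed.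

Lemma mulr_bigmaxl (c : R) (F : I -> R) : 0 <= c ->
  (\big[Num.max/0]_(i <- r | P i) F i) * c = \big[Num.max/0]_(i <- r | P i) (F i * c).
Proof.
by move=> c0; apply: (big_endo (fun x => x * c)) => [x y|]; rewrite ?maxr_pMl ?mul0r.
Qed.

End BigmaxNonneg.

Section MaxAlgebra.
Variables (R : realType) (n : nat).
Implicit Types X Y Z : 'M[R]_n.

Lemma maxmul_ge0 X Y : nonneg_mx (maxmul X Y).
Proof. by move=> i j; rewrite mxE bigmax_ge_id. Qed.

Lemma maxmulA X Y Z : nonneg_mx X -> nonneg_mx Z ->
  maxmul X (maxmul Y Z) = maxmul (maxmul X Y) Z.
Proof.
move=> X0 Z0; apply/matrixP => i j; rewrite !mxE.
under eq_bigr => k _ do rewrite mxE (mulr_bigmaxr _ _ _ (X0 i k)).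
under [RHS]eq_bigr => l _ do rewrite mxE (mulr_bigmaxl _ _ _ (Z0 l j)).
rewrite exchange_big_idem; last exact: maxxx.
by apply: eq_bigr => l _; apply: eq_bigr => k _; rewrite mulrA.
Qed.

Lemma maxmul1mx X : nonneg_mx X -> maxmul (maxid R n) X = X.
Proof.
move=> X0; apply/matrixP => i j; rewrite mxE (bigmaxD1 i) // mxE eqxx mul1r.
rewrite big1_idem => [|| k /negPf ki]; first exact/max_idPl/X0.
- exact: maxxx.
- by rewrite mxE eq_sym ki mul0r.
Qed.

Lemma maxmulDr X Y Z : nonneg_mx X ->
  maxmul X (maxadd Y Z) = maxadd (maxmul X Y) (maxmul X Z).
Proof.
move=> X0; apply/matrixP => i j; rewrite !mxE -bigmax_split.
by apply: eq_bigr => k _; rewrite mxE maxr_pMr.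
Qed.

Lemma maxmulDl X Y Z : nonneg_mx Z ->
  maxmul (maxadd X Y) Z = maxadd (maxmul X Z) (maxmul Y Z).
Proof.
move=> Z0; apply/matrixP => i j; rewrite !mxE -bigmax_split.
by apply: eq_bigr => k _; rewrite mxE maxr_pMl.
Qed.

Lemma upper_tri_maxmul X Y : upper_tri X -> upper_tri Y -> upper_tri (maxmul X Y).
Proof.
move=> uX uY i j ji; rewrite mxE; apply: big1_idem => [|k _]; first exact: maxxx.
have [ki|ik] := ltnP k i; first by rewrite uX ?mul0r.
by rewrite uY ?mulr0 // (leq_trans ji ik).
Qed.

Lemma upper_tri_maxadd X Y : upper_tri X -> upper_tri Y -> upper_tri (maxadd X Y).
Proof. by move=> uX uY i j ji; rewrite mxE uX // uY // maxxx. Qed.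

Lemma upper_tri_maxcomm X Y : upper_tri X -> upper_tri Y -> upper_tri (maxcomm X Y).
Proof. by move=> uX uY; apply: upper_tri_maxadd; apply: upper_tri_maxmul. Qed.

Section Conjugation.
Variables P Q : 'M[R]_n.
Hypotheses (P0 : nonneg_mx P) (Q0 : nonneg_mx Q) (PQ : maxmul P Q = maxid R n).

Let mxconj X := maxmul (maxmul Q X) P.

Lemma mxconjM X Y : nonneg_mx Y -> mxconj (maxmul X Y) = maxmul (mxconj X) (mxconj Y).
Proof.
move=> Y0; have PQYP : maxmul P (maxmul (maxmul Q Y) P) = maxmul Y P.
  by rewrite maxmulA // maxmulA // PQ maxmul1mx.
rewrite /mxconj -(maxmulA _ (maxmul_ge0 Q X) (maxmul_ge0 _ P)) PQYP.
by rewrite (maxmulA _ (maxmul_ge0 Q X) P0) -(maxmulA _ Q0 Y0).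
Qed.

Lemma mxconjD X Y : mxconj (maxadd X Y) = maxadd (mxconj X) (mxconj Y).
Proof. by rewrite /mxconj maxmulDr // maxmulDl. Qed.

Lemma mxconj_maxcomm X Y : nonneg_mx X -> nonneg_mx Y ->
  mxconj (maxcomm X Y) = maxcomm (mxconj X) (mxconj Y).
Proof. by move=> X0 Y0; rewrite /maxcomm mxconjD !mxconjM. Qed.

End Conjugation.

End MaxAlgebra.

Theorem lemma3p6 (R : realType) (n : nat) (A B : 'M[R]_n) :
  nonneg_mx A -> nonneg_mx B ->
  simul_triang (fun X => X = A \/ X = B) ->
  simul_triang (fun X => X = A \/ X = B \/ X = maxcomm A B).
Proof.
move=> A0 B0 [P [Q [P0 [Q0 [PQ [QP triAB]]]]]].
exists P, Q; do 4 split=> //.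
have uA := triAB A (or_introl erefl); have uB := triAB B (or_intror erefl).
move=> X [->|[->|->]] //.
by rewrite mxconj_maxcomm //; apply: upper_tri_maxcomm.
Qed.
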